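(* Let $\phi$ be a strictly convex norm on $\mathbf{R}^n$ of class $\mathcal{C}^2$ on $\mathbf{R}^n\setminus\{0\}$, $K\subseteq\mathbf{R}^n$ closed, $\sigma>1$, and $K_\sigma=\{x:\rho^\phi_K(x)\ge\sigma\}\setminus K$. For $t\in\mathbf{R}$ let $h_t$ be the multivalued map $h_t(y)=ty+(1-t)\xi^\phi_K(y)=\{ty+(1-t)a:a\in\xi^\phi_K(y)\}$. Then for every $0<t<\sigma$, $h_t|K_\sigma$ is (single-valued and) a homeomorphism of $K_\sigma$ onto $K_{\sigma/t}$ with inverse $h_{1/t}|K_{\sigma/t}$.
   Context: A norm $\phi$ is strictly convex if $\phi(a+b)=\phi(a)+\phi(b)$ implies $\phi(b)a=\phi(a)b$. For closed $K$: $\delta^\phi_K(x)=\inf\{\phi(y-x):y\in K\}$; $\xi^\phi_K(x)=K\cap\{w:\phi(x-w)=\delta^\phi_K(x)\}$; $\rho^\phi_K(x)=\sup\bigl(\mathbf{R}\cap\{s:\delta^\phi_K(a+s(x-a))=s\,\delta^\phi_K(x)\}\bigr)$ for any $a\in\xi^\phi_K(x)$ (independent of the choice of $a$). For any $\tau\ge1$, $K_\tau=\{x:\rho^\phi_K(x)\ge\tau\}\setminus K$. *)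

From HB Require Import structures.
From mathcomp Require Import all_boot all_order all_algebra.
From mathcomp Require Import all_classical all_reals all_analysis.
Set Implicit Arguments. Unset Strict Implicit. Unset Printing Implicit Defensive.
Import Order.TTheory GRing.Theory Num.Theory.
Import numFieldNormedType.Exports.
Local Open Scope classical_set_scope.
Local Open Scope ring_scope.

Section Defs.
Variables (R : realType) (n : nat).
Local Notation V := 'rV[R]_n.

Definition is_norm (phi : V -> R) : Prop :=
  [/\ forall x, phi x = 0 -> x = 0,
      forall (c : R) x, phi (c *: x) = `|c| * phi x
    & forall x y, phi (x + y) <= phi x + phi y].

Definition strictly_convex (phi : V -> R) : Prop :=
  forall a b, phi (a + b) = phi a + phi b -> phi b *: a = phi a *: b.

Definition evec (i : 'I_n) : V := delta_mx 0 i.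

Definition C2_on (U : set V) (f : V -> R) : Prop :=
  forall x, U x ->
    {for x, continuous f} /\
    forall i j : 'I_n,
      [/\ derivable f x (evec i),
          {for x, continuous (fun y => 'D_(evec i) f y)},
          derivable (fun y => 'D_(evec i) f y) x (evec j)
        & {for x, continuous (fun y => 'D_(evec j) (fun z => 'D_(evec i) f z) y)}].

Variable phi : V -> R.

Definition dist_fun (K : set V) (x : V) : R :=
  inf [set phi (y - x) | y in K].

Definition xi_fun (K : set V) (x : V) : set V :=
  K `&` [set w | phi (x - w) = dist_fun K x].

(* rho takes values in the extended reals (it may be +oo) *)
Definition rho_fun (K : set V) (x : V) : \bar R :=
  ereal_sup [set s%:E | s in [set s : R | exists2 a, xi_fun K x a &
      dist_fun K (a + s *: (x - a)) = s * dist_fun K x]].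

Definition K_tau (K : set V) (tau : R) : set V :=
  [set x | (tau%:E <= rho_fun K x)%E] `\` K.

Definition h_map (K : set V) (t : R) (y : V) : set V :=
  [set t *: y + (1 - t) *: a | a in xi_fun K y].

End Defs.

From HB Require Import structures.
From mathcomp Require Import all_boot all_order all_algebra.
From mathcomp Require Import all_classical all_reals all_analysis.
From mathcomp Require Import ring lra.
Set Implicit Arguments. Unset Strict Implicit. Unset Printing Implicit Defensive.
Import Order.TTheory GRing.Theory Num.Theory.
Import numFieldNormedType.Exports.
Local Open Scope classical_set_scope.
Local Open Scope ring_scope.

(* If rho(y) > 1, some nearest point a of y satisfies d(z) = s d(y) for a
   point z = a + s (y - a) with s > 1; then phi(z - b) <= phi(z - y) + phi(y - b)
   is an equality for every b in xi(y), and strict convexity forces b = a.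
   For y in K_sigma every point a + s (y - a), 0 <= s < sigma, has a as its
   nearest point and lies at distance s d(y); hence h_t moves y along this ray
   into K_(sigma/t), and h_(1/t) moves it back.  The single-valued projection
   is continuous on K_sigma by compactness: near-minimizers of phi(x - .) over
   the closed set K stay bounded, so nearest points of points close to x
   accumulate only at nearest points of x. *)

Lemma le_ereal_sup_itv (R : realType) (S : set R) (c : R) : 0 < c ->
  (forall s, 0 <= s -> s < c -> S s) -> (c%:E <= ereal_sup [set s%:E | s in S])%E.
Proof.
move=> c0 cS; have ubS s : S s -> (s%:E <= ereal_sup [set s%:E | s in S])%E.
  by move=> Ss; apply: ereal_sup_ubound; exists s.
case E: (ereal_sup _) (ubS 0 (cS 0 (lexx 0) c0)) => [u||] //= u0; last exact: leey.
rewrite !lee_fin in u0 *; rewrite leNgt; apply/negP => uc.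
have : (((u + c) / 2)%:E <= u%:E)%E by rewrite -E; apply/ubS/cS; lra.
rewrite lee_fin; lra.
Qed.

Section NearestPoint.
Variables (R : realType) (n : nat) (phi : 'rV[R]_n -> R).
Hypothesis phi_norm : is_norm phi.
Local Notation V := 'rV[R]_n.

Lemma phi_eq0 x : phi x = 0 -> x = 0.
Proof. by case: phi_norm => + _ _; apply. Qed.

Lemma phiZ c x : phi (c *: x) = `|c| * phi x.
Proof. by case: phi_norm. Qed.

Lemma ler_phiD x y : phi (x + y) <= phi x + phi y.
Proof. by case: phi_norm. Qed.

Lemma phi0 : phi 0 = 0.
Proof. by rewrite -(scale0r (0 : V)) phiZ normr0 mul0r. Qed.

Lemma phiN x : phi (- x) = phi x.
Proof. by rewrite -scaleN1r phiZ normrN1 mul1r. Qed.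

Lemma phi_ge0 x : 0 <= phi x.
Proof.
by have := ler_phiD x (- x); rewrite subrr phi0 phiN -mulr2n pmulrn_lge0.
Qed.

Lemma phi_distC x y : phi (x - y) = phi (y - x).
Proof. by rewrite -opprB phiN. Qed.

Lemma ler_phiB x y : phi x - phi y <= phi (x - y).
Proof. by rewrite lerBlDr; have := ler_phiD (x - y) y; rewrite subrK. Qed.

Lemma ler_dist_phi x y : `|phi x - phi y| <= phi (x - y).
Proof.
by rewrite ler_norml ler_phiB andbT lerNl opprB phi_distC ler_phiB.
Qed.

Lemma phi_le_norm : exists2 C, 0 <= C & forall x, phi x <= C * `|x|.
Proof.
exists (\sum_i phi (delta_mx 0 i)); first by apply: sumr_ge0 => i _; exact: phi_ge0.
move=> x; rewrite {1}[x]row_sum_delta mulr_suml.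
elim/big_rec2: _ => [|i y s _ IH]; first by rewrite phi0.
apply: le_trans (ler_phiD _ _) _; apply: lerD => //.
rewrite phiZ mulrC ler_wpM2l ?phi_ge0 // [leRHS]/Num.norm /= mx_normrE.
by apply/bigmax_geP; right; exists (0, i).
Qed.

Lemma phi_continuous : continuous phi.
Proof.
have [C C0 phiC] := phi_le_norm.
move=> x; apply/(@cvgrPdist_lt _ R^o _ _ (nbhs_filter x)) => e e0.
apply/(@nbhs_normP _ V).
have C1 : 0 < C + 1 by rewrite ltr_wpDl.
exists (e / (C + 1)); first by rewrite /= divr_gt0.
move=> y /=; rewrite ltr_pdivlMr // => xy.
apply: le_lt_trans (ler_dist_phi x y) _; apply: le_lt_trans (phiC _) _.
have := normr_ge0 (x - y); nra.
Qed.

Lemma phi_ge_norm : exists2 c, 0 < c & forall x, c * `|x| <= phi x.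
Proof.
pose S := [set x : V | `|x| = 1].
suff [c c0 Sc] : exists2 c, 0 < c & forall u, S u -> c <= phi u.
  exists c => // x; have [->|x0] := eqVneq x 0.
    by rewrite normr0 mulr0 phi_ge0.
  have nx0 : `|x| != 0 by rewrite normr_eq0.
  have Su : S (`|x|^-1 *: x) by rewrite /S /= normrZ normfV normr_id mulVf.
  rewrite -{2}[x](scalerKV nx0) phiZ normr_id [c * _]mulrC.
  by rewrite ler_wpM2l // Sc.
have [[u0 Su0]|S0] := pselect (S !=set0); last first.
  by exists 1 => // u Su; exfalso; apply: S0; exists u.
have cS : compact S.
  apply: bounded_closed_compact; first by exists 1; split => // M M1 x /= ->; exact: ltW.
  apply: (@preimage_closed _ _ (fun x : V => `|x|) [set r : R | r = 1]).
    by move=> x _; exact: norm_continuous.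
  exact: closed_eq.
have [u Su minu] := compact_EVT_min (ex_intro _ u0 Su0) cS
  (continuous_subspaceT phi_continuous).
rewrite inE in Su; exists (phi u) => [|v Sv]; last by apply: minu; rewrite inE.
rewrite lt_def phi_ge0 andbT; apply/eqP => /phi_eq0 u0'.
by move: Su; rewrite /S /= u0' normr0 => /eqP; rewrite eq_sym oner_eq0.
Qed.

Variable K : set V.
Local Notation d := (dist_fun phi K).
Local Notation xi := (xi_fun phi K).
Local Notation rho := (rho_fun phi K).

Lemma dist_le x y : K y -> d x <= phi (y - x).
Proof.
move=> Ky; apply: ge_inf; last by exists y.
by exists 0 => _ [z _ <-]; exact: phi_ge0.
Qed.

Lemma dist_lip x x' : K !=set0 -> d x <= d x' + phi (x - x').
Proof.
move=> [y Ky]; rewrite -lerBlDr; apply: lb_le_inf; first by exists (phi (y - x')), y.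
move=> _ [z Kz <-]; rewrite lerBlDr; apply: le_trans (dist_le x Kz) _.
by rewrite [phi (x - x')]phi_distC; have := ler_phiD (z - x') (x' - x); rewrite addrA subrK.
Qed.

Lemma dist_gt0_notin x : 0 < d x -> ~ K x.
Proof. by move=> dx0 Kx; move: (dist_le x Kx); rewrite subrr phi0 leNgt dx0. Qed.

Definition ray (a x : V) (s : R) : V := a + s *: (x - a).

Lemma ray_subl a x s : ray a x s - a = s *: (x - a).
Proof. by rewrite /ray addrC addKr. Qed.

Lemma ray_sub a x s s' : ray a x s - ray a x s' = (s - s') *: (x - a).
Proof. by rewrite /ray opprD addrACA subrr add0r scalerBl. Qed.

Lemma ray1 a x : ray a x 1 = x.
Proof. by rewrite /ray scale1r addrC subrK. Qed.

Lemma ray_comp a x s t : ray a (ray a x t) s = ray a x (s * t).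
Proof. by rewrite {1}/ray ray_subl scalerA. Qed.

Lemma rayE a x t : t *: x + (1 - t) *: a = ray a x t.
Proof. by rewrite /ray scalerBl scale1r scalerBr addrCA. Qed.

Lemma dist_ray_le x a s : xi x a -> 0 <= s -> d (ray a x s) <= s * d x.
Proof.
move=> [Ka dxa] s0; apply: le_trans (dist_le _ Ka) _.
by rewrite phi_distC ray_subl phiZ ger0_norm // dxa.
Qed.

Lemma dist_ray_down x a s s' : xi x a -> 0 <= s' -> s' <= s ->
  d (ray a x s) = s * d x -> d (ray a x s') = s' * d x.
Proof.
move=> [Ka dxa] s'0 s's ds; apply/eqP; rewrite eq_le dist_ray_le //=.
have := dist_lip (ray a x s) (ray a x s') (ex_intro _ a Ka).
by rewrite ray_sub phiZ ger0_norm ?subr_ge0 // dxa ds mulrBl addrCA lerDl subr_ge0.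
Qed.

Lemma xi_ray x a s : xi x a -> 0 <= s -> d (ray a x s) = s * d x ->
  xi (ray a x s) a.
Proof.
by move=> [Ka dxa] s0 ds; split => //=; rewrite ray_subl phiZ ger0_norm // dxa ds.
Qed.

Lemma dist_gt0 x a : ~ K x -> xi x a -> 0 < d x.
Proof.
move=> Kx [Ka <-]; rewrite lt_def phi_ge0 andbT; apply/eqP => /phi_eq0/eqP.
by rewrite subr_eq0 => /eqP xa; apply: Kx; rewrite xa.
Qed.

Lemma rho_gt r y : (r%:E < rho y)%E ->
  exists2 s, r < s & exists2 a, xi y a & d (ray a y s) = s * d y.
Proof.
by move/ereal_sup_gt => [_ [s [a xa ds] <-]]; rewrite lte_fin => rs; exists s => //; exists a.
Qed.

Lemma rho_ge c y : 0 < c ->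
  (forall s, 0 <= s -> s < c -> exists2 a, xi y a & d (ray a y s) = s * d y) ->
  (c%:E <= rho y)%E.
Proof. exact: le_ereal_sup_itv. Qed.

Hypothesis phi_strict : strictly_convex phi.

Lemma xi_ray_set1 x a s : ~ K x -> xi x a -> 1 < s -> d (ray a x s) = s * d x ->
  xi x = [set a].
Proof.
move=> Kx xa s1 ds; have dx0 := dist_gt0 Kx xa; case: xa => Ka dxa.
apply/seteqP; split => [b [Kb dxb]|_ ->] //=.
pose z := ray a x s.
have dzx : phi (z - x) = (s - 1) * d x.
  by rewrite -[in z - x](ray1 a x) ray_sub phiZ ger0_norm ?subr_ge0 ?ltW // dxa.
have tight : phi ((z - x) + (x - b)) = phi (z - x) + phi (x - b).
  apply/eqP; rewrite eq_le ler_phiD /= addrA subrK dzx dxb -phi_distC.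
  by apply: le_trans (dist_le _ Kb); rewrite /z ds mulrBl mul1r subrK.
have := phi_strict tight; rewrite dzx dxb -[in z - x](ray1 a x) ray_sub scalerA mulrC.
move/scalerI; rewrite mulf_neq0 ?gt_eqF ?subr_gt0 // => /(_ isT).
by move/addrI/oppr_inj.
Qed.

(* An arbitrary nearest point, and [0] when [xi x] is empty. *)
Definition proj (x : V) : V := xget 0 (xi x).

Lemma Ktau_xi tau y : 1 < tau -> K_tau phi K tau y -> xi y = [set proj y].
Proof.
move=> tau1 [rhoy Ky]; have /rho_gt[s s1 [a xa ds]] : (1%:E < rho y)%E.
  by apply: lt_le_trans rhoy; rewrite lte_fin.
have xiE := xi_ray_set1 Ky xa s1 ds.
suff -> : proj y = a by [].
by have : xi y (proj y) := xgetPex 0 (ex_intro _ a xa); rewrite xiE.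
Qed.

Lemma Ktau_ray tau y s : 1 < tau -> K_tau phi K tau y -> 0 <= s -> s < tau ->
  d (ray (proj y) y s) = s * d y.
Proof.
move=> tau1 Ky s0 stau; have /rho_gt[s' ss' [a xa ds']] : (s%:E < rho y)%E.
  by apply: lt_le_trans Ky.1; rewrite lte_fin.
have a_proj : a = proj y by move: xa; rewrite (Ktau_xi tau1 Ky).
by rewrite -a_proj; apply: dist_ray_down xa s0 (ltW ss') ds'.
Qed.

Definition h_fun (t : R) (y : V) : V := ray (proj y) y t.

Section Transfer.
Variables (tau t : R) (y : V).
Hypotheses (tau1 : 1 < tau) (t0 : 0 < t) (t_lt_tau : t < tau).
Hypothesis Ky : K_tau phi K tau y.

Let xi_y : xi y (proj y).
Proof. by rewrite (Ktau_xi tau1 Ky). Qed.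

Let dist_h_fun : d (h_fun t y) = t * d y.
Proof. exact: Ktau_ray tau1 Ky (ltW t0) t_lt_tau. Qed.

Lemma h_fun_Ktau : K_tau phi K (tau / t) (h_fun t y).
Proof.
split; last by apply: dist_gt0_notin; rewrite dist_h_fun mulr_gt0 ?(dist_gt0 Ky.2 xi_y).
apply: rho_ge => [|s s0 st]; first by rewrite divr_gt0 // (lt_trans ltr01 tau1).
exists (proj y); first exact: xi_ray xi_y (ltW t0) dist_h_fun.
rewrite ray_comp dist_h_fun mulrA; apply: (Ktau_ray tau1 Ky).
  by rewrite mulr_ge0 // ltW.
by rewrite -ltr_pdivlMr.
Qed.

Lemma proj_h_fun : proj (h_fun t y) = proj y.
Proof.
have tau_t1 : 1 < tau / t by rewrite ltr_pdivlMr // mul1r.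
have := xi_ray xi_y (ltW t0) dist_h_fun.
by rewrite -/(h_fun t y) (Ktau_xi tau_t1 h_fun_Ktau) => ->.
Qed.

Lemma h_funK : h_fun t^-1 (h_fun t y) = y.
Proof. by rewrite {1}/h_fun proj_h_fun ray_comp mulVf ?gt_eqF // ray1. Qed.

End Transfer.

Lemma h_mapE tau t y : 1 < tau -> K_tau phi K tau y ->
  h_map phi K t y = [set h_fun t y].
Proof.
by move=> tau1 Ky; rewrite /h_map (Ktau_xi tau1 Ky) image_set1 rayE.
Qed.

Lemma xi_near_min x x' b : xi x' b -> phi (x - b) <= d x + 2 * phi (x - x').
Proof.
move=> [Kb dxb]; have := dist_lip x' x (ex_intro _ b Kb).
have := ler_phiD (x - x') (x' - b); rewrite addrA subrK dxb [phi (x' - x)]phi_distC.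
lra.
Qed.

Hypothesis K_closed : closed K.

Lemma xi_of_near_min x (B : set V) : closed B ->
  (forall h, 0 < h -> exists2 b, (K `&` B) b & phi (x - b) <= d x + h) ->
  exists2 b, B b & xi x b.
Proof.
move=> Bcl near_min.
have phix_cont : continuous (fun b : V => phi (x - b)).
  move=> b; apply: (@continuous_comp _ _ _ (fun b : V => x - b) phi).
    by apply: continuousB => //; exact: cst_continuous.
  exact: phi_continuous.
pose A := K `&` B `&` [set b | phi (x - b) <= d x + 1].
have cA : compact A.
  have [c c0 phic] := phi_ge_norm; apply: bounded_closed_compact.
    exists (`|x| + (d x + 1) / c); split; first exact: num_real.
    move=> r r_gt b [_ xb] /=; apply: ltW; apply: le_lt_trans r_gt.
    have -> : b = x - (x - b) by rewrite opprB addrC subrK.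
    apply: le_trans (ler_normB _ _) _; rewrite lerD2l ler_pdivlMr // mulrC.
    exact: le_trans (phic _) xb.
  apply: closedI; first exact: closedI.
  apply: (@preimage_closed _ _ (fun b : V => phi (x - b)) [set r | r <= d x + 1]).
    by move=> b _; exact: phix_cont.
  exact: closed_le.
have A0 : A !=set0 by have [b1 ? ?] := near_min 1 ltr01; exists b1.
have [b0 /set_mem[[Kb0 Bb0] _] minb0] :=
  compact_EVT_min A0 cA (continuous_subspaceT phix_cont).
exists b0 => //; split => //=; apply/eqP.
rewrite eq_le [in X in _ && X]phi_distC dist_le // andbT.
apply/ler_addgt0Pr => h h0.
have h1_gt0 : 0 < Num.min h 1 by rewrite lt_min h0 ltr01.
have [b [Kb Bb] xb] := near_min _ h1_gt0.
apply: le_trans (minb0 b _) (le_trans xb _); last by rewrite lerD2l ge_min lexx.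
by rewrite inE; split => //; apply: le_trans xb _; rewrite lerD2l ge_min lexx orbT.
Qed.

Lemma xi_usc x a e : xi x `<=` [set a] -> 0 < e ->
  \forall x' \near x, forall b, xi x' b -> `|b - a| < e.
Proof.
move=> xia e0; apply: contrapT => far.
have [C C0 phiC] := phi_le_norm.
have [b eb xb] : exists2 b, e <= `|b - a| & xi x b.
  apply: xi_of_near_min => [|h h0].
    apply: (@preimage_closed _ _ (fun b : V => `|b - a|) [set r | e <= r]).
      move=> b _; apply: (@continuous_comp _ _ _ (fun b : V => b - a)).
        by apply: continuousB => //; exact: cst_continuous.
      exact: norm_continuous.
    exact: closed_ge.
  have eta_gt0 : 0 < h / (2 * C + 1) by rewrite divr_gt0 //; lra.
  have [x' [xx' [b [xb eb]]]] : exists x', `|x - x'| < h / (2 * C + 1) /\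
      exists b, xi x' b /\ e <= `|b - a|.
    apply: contrapT => none; apply: far; apply/(@nbhs_normP _ V).
    exists (h / (2 * C + 1)) => // x' /= xx' b xb; rewrite ltNge; apply/negP => eb.
    by apply: none; exists x'; split => //; exists b.
  exists b; first by split => //; exact: xb.1.
  have := xi_near_min x xb; have := phiC (x - x'); rewrite ltr_pdivlMr in xx'; nra.
by move: eb; rewrite (xia _ xb) subrr normr0 leNgt e0.
Qed.

Lemma proj_continuous (A : set V) : (forall y, A y -> xi y = [set proj y]) ->
  {within A, continuous proj}.
Proof.
move=> Axi; apply/subspace_continuousP => y Ay; apply/cvgrPdist_lt => e e0.
have xiy : xi y `<=` [set proj y] by rewrite (Axi y Ay).
rewrite near_withinE; apply: filterS (xi_usc xiy e0) => y' near_y' Ay'.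
by rewrite distrC; apply: near_y'; rewrite (Axi y' Ay').
Qed.

Lemma h_fun_continuous tau t : 1 < tau -> {within K_tau phi K tau, continuous (h_fun t)}.
Proof.
move=> tau1; have projc := proj_continuous (fun y => Ktau_xi tau1).
have -> : h_fun t = fun y => t *: y + (1 - t) *: proj y.
  by apply/funext => y; rewrite rayE.
move=> y; apply: cvgD; apply: cvgZ; try exact: cvg_cst.
  by apply: continuous_subspaceT => x.
exact: projc.
Qed.

End NearestPoint.

Theorem lemma2p34 (R : realType) (n : nat) (phi : 'rV[R]_n -> R)
  (K : set 'rV[R]_n) (sigma : R) :
  is_norm phi -> strictly_convex phi -> C2_on (~` [set 0]) phi ->
  closed K -> 1 < sigma ->
  forall t : R, 0 < t -> t < sigma ->
  exists f g : 'rV[R]_n -> 'rV[R]_n,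
    (forall y, K_tau phi K sigma y -> h_map phi K t y = [set f y]) /\
       (forall z, K_tau phi K (sigma / t) z -> h_map phi K t^-1 z = [set g z]) /\
       (forall y, K_tau phi K sigma y -> K_tau phi K (sigma / t) (f y)) /\
       (forall z, K_tau phi K (sigma / t) z -> K_tau phi K sigma (g z)) /\
       (forall y, K_tau phi K sigma y -> g (f y) = y) /\
       (forall z, K_tau phi K (sigma / t) z -> f (g z) = z) /\
       {within K_tau phi K sigma, continuous f} /\
       {within K_tau phi K (sigma / t), continuous g}.
Proof.
move=> phi_norm phi_strict _ K_closed sigma1 t t0 t_lt_sigma.
have sigma_t1 : 1 < sigma / t by rewrite ltr_pdivlMr // mul1r.
have tV0 : 0 < t^-1 by rewrite invr_gt0.
have tV_lt : t^-1 < sigma / t by rewrite ltr_pdivlMr // mulVf ?gt_eqF.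
have sigmaE : sigma / t / t^-1 = sigma by rewrite invrK divfK ?gt_eqF.
exists (h_fun phi K t), (h_fun phi K t^-1).
split; first by move=> y; exact: h_mapE sigma1.
split; first by move=> z; exact: h_mapE sigma_t1.
split; first by move=> y; exact: h_fun_Ktau sigma1 t0 t_lt_sigma.
split; first by move=> z /(h_fun_Ktau phi_norm phi_strict sigma_t1 tV0 tV_lt); rewrite sigmaE.
split; first by move=> y; exact: h_funK sigma1 t0 t_lt_sigma.
split; first by move=> z /(h_funK phi_norm phi_strict sigma_t1 tV0 tV_lt); rewrite invrK.
by split; apply: h_fun_continuous.
Qed.
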